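(* Let $\vec X^m\in\underline V^h_{\partial_0}$ satisfy assumption $(\mathfrak A)$, assume $\vec\omega^m(q_j)\neq\vec0$ for all nodes $q_j\in\overline I\setminus\partial_0I$, and let $\Delta t_m>0$. Then there exists a unique pair $(\delta\vec X^{m+1},\vec\kappa^{m+1})\in\underline V^h_\partial\times\underline V^h$ such that, with $\vec X^{m+1}=\vec X^m+\delta\vec X^{m+1}$, $$\Big(\tfrac{\vec X^{m+1}-\vec X^m}{\Delta t_m},\vec\chi\,|\vec X^m_\rho|\Big)^h=\Big(\vec\kappa^{m+1}-\vec{\mathfrak K}^m(\vec\kappa^{m+1}),\vec\chi\,|\vec X^m_\rho|\Big)^h\quad\forall\,\vec\chi\in\underline V^h,$$ $$\Big(\vec\kappa^{m+1},\vec\eta\,|\vec X^m_\rho|\Big)^h+\Big(\vec X^{m+1}_\rho,\vec\eta_\rho|\vec X^m_\rho|^{-1}\Big)=-\sum_{i=1}^2\sum_{p\in\partial_iI}\widehat\varrho^{(p)}\,\vec\eta(p)\cdot\vec e_{3-i}\quad\forall\,\vec\eta\in\underline V^h_\partial .$$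
   Context: Setup. $\vec e_1=(1,0)^T$, $\vec e_2=(0,1)^T$; ''$\cdot$'' is the Euclidean inner product. $I$ is either the periodic interval $\mathbb R/\mathbb Z$ (with $\partial I=\emptyset$) or $I=(0,1)$ (with $\partial I=\{0,1\}$). $\partial I=\partial_DI\cup\partial_0I\cup\partial_1I\cup\partial_2I$ is a given disjoint partition, and $\widehat\varrho^{(p)}\in\mathbb R$, $p\in\{0,1\}$, are given constants with $|\widehat\varrho^{(p)}|\le1$. Let $J\ge3$, $h=1/J$, $q_j=jh$ ($j=0,\dots,J$; $q_0=q_J$ identified in the periodic case). $V^h$ is the space of continuous functions on $\overline I$ (periodic if $I=\mathbb R/\mathbb Z$) that are affine on each $[q_{j-1},q_j]$; $\underline V^h=[V^h]^2$; $\underline V^h_{\partial_0}=\{\vec\eta\in\underline V^h:\vec\eta(\rho)\cdot\vec e_1=0\ \forall\rho\in\partial_0I\}$; $\underline V^h_\partial=\{\vec\eta\in\underline V^h_{\partial_0}:\vec\eta(\rho)\cdot\vec e_i=0\ \forall\rho\in\partial_iI,\ i=1,2;\ \vec\eta(\rho)=\vec0\ \forall\rho\in\partial_DI\}$. $(\cdot,\cdot)$ is the $L^2(I)$ inner product (with dot product for vector functions), and for piecewise continuous $f,g$ the mass-lumped product is $(f,g)^h=\tfrac h2\sum_{j=1}^J[(fg)(q_j^-)+(fg)(q_{j-1}^+)]$. For $\vec X^m\in\underline V^h_{\partial_0}$ with $|\vec X^m_\rho|>0$ a.e., set $\vec\nu^m=-[\vec X^m_\rho]^\perp/|\vec X^m_\rho|$,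 where $(a,b)^\perp=(b,-a)$, and let $\vec\omega^m\in\underline V^h$ be defined by $(\vec\omega^m,\vec\varphi|\vec X^m_\rho|)^h=(\vec\nu^m,\vec\varphi|\vec X^m_\rho|)$ for all $\vec\varphi\in\underline V^h$. Assumption $(\mathfrak A)$: $|\vec X^m_\rho|>0$ a.e. on $I$ and $\vec X^m(\rho)\cdot\vec e_1>0$ for all $\rho\in\overline I\setminus\partial_0I$. For $\vec\kappa\in\underline V^h$, $\vec{\mathfrak K}^m(\vec\kappa)\in\underline V^h$ is defined nodally by $\vec{\mathfrak K}^m(\vec\kappa)(q_j)=\frac{\vec\omega^m(q_j)\cdot\vec e_1}{\vec X^m(q_j)\cdot\vec e_1}\,\frac{\vec\omega^m(q_j)}{|\vec\omega^m(q_j)|^2}$ if $q_j\in\overline I\setminus\partial_0I$ and $\vec{\mathfrak K}^m(\vec\kappa)(q_j)=-\vec\kappa(q_j)$ if $q_j\in\partial_0I$. *)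

From Stdlib Require Import Reals Lra Lia.
Open Scope R_scope.

Definition R2 : Type := (R * R)%type.
Definition vadd (u v : R2) : R2 := (fst u + fst v, snd u + snd v).
Definition vsub (u v : R2) : R2 := (fst u - fst v, snd u - snd v).
Definition vscal (a : R) (u : R2) : R2 := (a * fst u, a * snd u).
Definition vopp (u : R2) : R2 := (- fst u, - snd u).
Definition vdot (u v : R2) : R := fst u * fst v + snd u * snd v.
Definition vnorm (u : R2) : R := sqrt (vdot u u).
Definition vperp (u : R2) : R2 := (snd u, - fst u).
Definition vzero : R2 := (0, 0).

Fixpoint sumR (n : nat) (F : nat -> R) : R :=
  match n with O => 0 | S k => sumR k F + F (S k) end.

(** Mesh: J elements, h = 1/J, nodes q_j = j h, j = 0..J.
    A function of V^h (resp. underline V^h) is represented by its nodal values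
    f : nat -> R2, f j = value at q_j (only j <= J matters); in the periodic
    case q_J = q_0 is identified, i.e. f J = f 0. Element j (1 <= j <= J) is
    [q_{j-1}, q_j]. *)
Definition hmesh (J : nat) : R := / INR J.

(** Boundary types: partition of dI into d_D I, d_0 I, d_1 I, d_2 I. *)
Inductive bctype := BD | B0 | B1 | B2.
Definition bc_eqb (a b : bctype) : bool :=
  match a, b with
  | BD, BD | B0, B0 | B1, B1 | B2, B2 => true
  | _, _ => false
  end.

(** per = true : I = R/Z (dI empty); per = false : I = (0,1), with the
    endpoint 0 (node 0) of type bcL and the endpoint 1 (node J) of type bcR.
    in_bd J per bcL bcR k j  <=>  node q_j lies in d_k I. *)
Definition in_bd (J : nat) (per : bool) (bcL bcR : bctype) (k : bctype) (j : nat) : bool :=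
  negb per && ((Nat.eqb j 0 && bc_eqb bcL k) || (Nat.eqb j J && bc_eqb bcR k)).

Definition in_Vh (J : nat) (per : bool) (f : nat -> R2) : Prop :=
  per = true -> f J = f 0%nat.

Definition in_V0 (J : nat) (per : bool) (bcL bcR : bctype) (f : nat -> R2) : Prop :=
  in_Vh J per f /\
  forall j, (j <= J)%nat -> in_bd J per bcL bcR B0 j = true -> fst (f j) = 0.

Definition in_Vd (J : nat) (per : bool) (bcL bcR : bctype) (f : nat -> R2) : Prop :=
  in_V0 J per bcL bcR f /\
  forall j, (j <= J)%nat ->
    (in_bd J per bcL bcR B1 j = true -> fst (f j) = 0) /\
    (in_bd J per bcL bcR B2 j = true -> snd (f j) = 0) /\
    (in_bd J per bcL bcR BD j = true -> f j = vzero).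

Definition Xrho (J : nat) (X : nat -> R2) (j : nat) : R2 :=
  vscal (INR J) (vsub (X j) (X (j - 1)%nat)).
Definition absXrho (J : nat) (X : nat -> R2) (j : nat) : R := vnorm (Xrho J X j).
Definition nu (J : nat) (X : nat -> R2) (j : nat) : R2 :=
  vscal (- / absXrho J X j) (vperp (Xrho J X j)).

(** Mass-lumped product of piecewise continuous (scalar) integrand fg:
    (f,g)^h = h/2 sum_{j=1}^J [ (fg)(q_j^-) + (fg)(q_{j-1}^+) ],
    where fg_minus j = (fg)(q_j^-) and fg_plus j = (fg)(q_{j-1}^+). *)
Definition mass_lumped (J : nat) (fg_minus fg_plus : nat -> R) : R :=
  hmesh J / 2 * sumR J (fun j => fg_minus j + fg_plus j).

Definition ml_w (J : nat) (X : nat -> R2) (u v : nat -> R2) : R :=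
  mass_lumped J
    (fun j => vdot (u j) (v j) * absXrho J X j)
    (fun j => vdot (u (j - 1)%nat) (v (j - 1)%nat) * absXrho J X j).

(** Exact L^2 inner product (nu^m, phi |X^m_rho|) for phi in underline V^h:
    on element j the integrand is affine, so its integral is
    h * |X_rho|_j * nu_j . (phi(q_{j-1}) + phi(q_j))/2. *)
Definition l2_nu_phi (J : nat) (X : nat -> R2) (phi : nat -> R2) : R :=
  sumR J (fun j => hmesh J * absXrho J X j *
                   vdot (nu J X j) (vscal (/2) (vadd (phi (j - 1)%nat) (phi j)))).

(** Exact L^2 inner product (Y_rho, eta_rho |X_rho|^{-1}) (piecewise constant integrand) *)
Definition l2_stiff (J : nat) (X Y eta : nat -> R2) : R :=
  sumR J (fun j => hmesh J * (vdot (Xrho J Y j) (Xrho J eta j) / absXrho J X j)).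

Definition Kfrak (J : nat) (per : bool) (bcL bcR : bctype)
  (X omega kappa : nat -> R2) (j : nat) : R2 :=
  if in_bd J per bcL bcR B0 j then vopp (kappa j)
  else vscal (fst (omega j) / fst (X j) / vdot (omega j) (omega j)) (omega j).

(** boundary term sum_{i=1}^2 sum_{p in d_i I} rho^(p) eta(p).e_{3-i};
    p = 0 is node 0 (constant rho0), p = 1 is node J (constant rho1). *)
Definition bd_contrib (k : bctype) (r : R) (v : R2) : R :=
  match k with
  | B1 => r * snd v
  | B2 => r * fst v
  | _ => 0
  end.
Definition bdry_term (J : nat) (per : bool) (bcL bcR : bctype) (rho0 rho1 : R)
  (eta : nat -> R2) : R :=
  if per then 0 else bd_contrib bcL rho0 (eta 0%nat) + bd_contrib bcR rho1 (eta J).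

(** Assumption (A) on X^m: |X_rho| > 0 on every element, and X.e1 > 0 at every
    point of closure(I) \ d_0 I; the points of element j are
    (1-t) q_{j-1} + t q_j, t in [0,1], where X is (1-t) X(q_{j-1}) + t X(q_j). *)
Definition assumption_A (J : nat) (per : bool) (bcL bcR : bctype) (X : nat -> R2) : Prop :=
  (forall j, (1 <= j <= J)%nat -> absXrho J X j > 0) /\
  (forall j, (1 <= j <= J)%nat -> forall t, 0 <= t <= 1 ->
     ~ (t = 0 /\ in_bd J per bcL bcR B0 (j - 1)%nat = true) ->
     ~ (t = 1 /\ in_bd J per bcL bcR B0 j = true) ->
     fst (vadd (vscal (1 - t) (X (j - 1)%nat)) (vscal t (X j))) > 0).

Definition is_omega (J : nat) (per : bool) (X omega : nat -> R2) : Prop :=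
  in_Vh J per omega /\
  forall phi, in_Vh J per phi -> ml_w J X omega phi = l2_nu_phi J X phi.

Definition scheme_eqs (J : nat) (per : bool) (bcL bcR : bctype) (rho0 rho1 dt : R)
  (Xm omega dX kappa : nat -> R2) : Prop :=
  let Xn := fun j => vadd (Xm j) (dX j) in
  (forall chi, in_Vh J per chi ->
     ml_w J Xm (fun j => vscal (/ dt) (vsub (Xn j) (Xm j))) chi
     = ml_w J Xm (fun j => vsub (kappa j) (Kfrak J per bcL bcR Xm omega kappa j)) chi) /\
  (forall eta, in_Vd J per bcL bcR eta ->
     ml_w J Xm kappa eta + l2_stiff J Xm Xn eta
     = - bdry_term J per bcL bcR rho0 rho1 eta).

(* Tested against the lumped mass product, which is positive definite because |X^m_rho| > 0,
   the first equation holds exactly when kappa^{m+1} is read off nodally from dX^{m+1}: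
   kappa = dX / (2 dt) on d_0 I and kappa = dX / dt + K^m elsewhere.  Substituting this into
   the second equation leaves a square linear system for dX in V^h_d whose bilinear form
   (dX/(c dt), eta |X^m_rho|)^h + (dX_rho, eta_rho |X^m_rho|^{-1}) is positive definite on
   V^h_d.  It is therefore injective, hence (finite dimension) bijective. *)

From Stdlib Require Import Reals Lra Lia Bool FunctionalExtensionality.

Module RealMatrix.
From mathcomp Require Import all_boot all_algebra.
From mathcomp Require Import Rstruct.
Import GRing.Theory.
Local Open Scope ring_scope.

Lemma linear_injective_surjective (M : nat) (L : (nat -> R) -> nat -> R) :
  (forall x x' k, L (fun i => Rplus (x i) (x' i)) k = Rplus (L x k) (L x' k)) ->
  (forall a x k, L (fun i => Rmult a (x i)) k = Rmult a (L x k)) ->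
  (forall x, (forall k, lt k M -> L x k = R0) -> forall i, lt i M -> x i = R0) ->
  forall y : nat -> R, exists x, forall k, lt k M -> L x k = y k.
Proof.
move=> Ladd Lscale Linj y.
have L0 k : L (fun=> 0) k = 0.
  have -> : (fun=> 0) = (fun i => Rmult 0 ((fun=> 0 : R) i)) :> (nat -> R).
    by apply: functional_extensionality => i; rewrite Rmult_0_l.
  by rewrite Lscale Rmult_0_l.
pose e (i : 'I_M) : nat -> R := fun n => if n == nat_of_ord i then 1 else 0.
have Lsum (s : seq 'I_M) (c : 'I_M -> R) k :
    L (fun n => \sum_(i <- s) c i * e i n) k = \sum_(i <- s) c i * L (e i) k.
  elim: s => [|i s IH].
    have -> : (fun n => \sum_(i <- [::]) c i * e i n) = (fun=> 0) :> (nat -> R).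
      by apply: functional_extensionality => n; rewrite big_nil.
    by rewrite big_nil L0.
  have -> : (fun n => \sum_(j <- i :: s) c j * e j n)
          = (fun n => c i * e i n + \sum_(j <- s) c j * e j n) :> (nat -> R).
    by apply: functional_extensionality => n; rewrite big_cons.
  by rewrite big_cons Ladd IH Lscale.
pose f (v : 'rV[R]_M) : nat -> R := fun n => \sum_(i < M) v 0 i * e i n.
have fE v (i : 'I_M) : f v i = v 0 i.
  rewrite /f (bigD1 i) //= big1 ?addr0; first by rewrite /e eqxx mulr1.
  by move=> j /negbTE ji; rewrite /e (inj_eq val_inj) eq_sym ji mulr0.
pose A : 'M[R]_M := \matrix_(i, k) L (e i) k.
have LfE v (k : 'I_M) : L (f v) k = (v *m A) 0 k.
  by rewrite /f Lsum mxE; apply: eq_bigr => i _; rewrite mxE.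
have A_inj (v : 'rV_M) : v *m A = 0 -> v = 0.
  move=> vA0; apply/rowP => i; rewrite mxE -fE.
  apply: (Linj (f v)); last exact/ltP.
  move=> k /ltP Hk; by rewrite (LfE v (Ordinal Hk)) vA0 mxE.
have A_unit : A \in unitmx.
  rewrite -row_free_unit -kermx_eq0; apply/eqP/row_matrixP => i.
  by rewrite row0; apply: A_inj; rewrite -row_mul mulmx_ker row0.
exists (f (\row_k y k *m invmx A)) => k /ltP Hk.
by rewrite (LfE _ (Ordinal Hk)) mulmxKV // mxE.
Qed.
End RealMatrix.

Open Scope bool_scope.
Open Scope R_scope.

Ltac vunfold := unfold vadd, vsub, vscal, vopp, vzero, vdot in *; cbn [fst snd] in *.
Ltac vring := apply injective_projections; vunfold; ring.

Lemma vdot_vadd_r a b c : vdot a (vadd b c) = vdot a b + vdot a c.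
Proof. vunfold; ring. Qed.

Lemma vdot_vzero_r a : vdot a vzero = 0.
Proof. vunfold; ring. Qed.

Lemma vdot_vscal_l s a b : vdot (vscal s a) b = s * vdot a b.
Proof. vunfold; ring. Qed.

Lemma vdot_self_nonneg v : 0 <= vdot v v.
Proof. vunfold; nra. Qed.

Lemma vdot_self_eq0 v : vdot v v = 0 -> v = vzero.
Proof. intros H; apply injective_projections; vunfold; nra. Qed.

Lemma vsub_eq0 a b : vsub a b = vzero -> a = b.
Proof.
  intros H; apply injective_projections;
    [apply (f_equal fst) in H | apply (f_equal snd) in H]; vunfold; lra.
Qed.

Definition vcoord (c : bool) (v : R2) : R := if c then snd v else fst v.

Lemma vcoord_vadd c u v : vcoord c (vadd u v) = vcoord c u + vcoord c v.
Proof. destruct c; reflexivity. Qed.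

Lemma vcoord_vscal c a u : vcoord c (vscal a u) = a * vcoord c u.
Proof. destruct c; reflexivity. Qed.

Lemma vcoord_inj u v : (forall c, vcoord c u = vcoord c v) -> u = v.
Proof. intros H; apply injective_projections; [apply (H false) | apply (H true)]. Qed.

Lemma vdot_vcoord a b : vdot a b = vcoord false a * vcoord false b + vcoord true a * vcoord true b.
Proof. reflexivity. Qed.

Definition vselect (m : bool -> bool) (a b : R2) : R2 :=
  (if m false then fst a else fst b, if m true then snd a else snd b).

Lemma vcoord_vselect m c a b :
  vcoord c (vselect m a b) = if m c then vcoord c a else vcoord c b.
Proof. destruct c; reflexivity. Qed.

Lemma vselect_same m a : vselect m a a = a.
Proof. unfold vselect; destruct (m false), (m true); symmetry; apply surjective_pairing. Qed.

Lemma nodal_linear_surjective (n : nat) (L : (nat -> R2) -> nat -> R2) :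
  (forall u v k, L (fun i => vadd (u i) (v i)) k = vadd (L u k) (L v k)) ->
  (forall a u k, L (fun i => vscal a (u i)) k = vscal a (L u k)) ->
  (forall u, (forall k, (k <= n)%nat -> L u k = vzero) ->
     forall i, (i <= n)%nat -> u i = vzero) ->
  forall y, exists u, forall k, (k <= n)%nat -> L u k = y k.
Proof.
  intros Ladd Lscal Linj y.
  (* Node [i], coordinate [c] is stored at index [2 i + c] of a real vector. *)
  set (pack := fun (x : nat -> R) i => (x (2 * i)%nat, x (S (2 * i))) : R2).
  set (L' := fun x k => vcoord (Nat.odd k) (L (pack x) (Nat.div2 k))).
  assert (Hindex : forall i (c : bool),
    Nat.div2 (2 * i + Nat.b2n c) = i /\ Nat.odd (2 * i + Nat.b2n c) = c).
  { intros i []; cbn [Nat.b2n].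
    - rewrite Nat.add_1_r, Nat.div2_succ_double, Nat.odd_succ, Nat.even_even; auto.
    - rewrite Nat.add_0_r, Nat.div2_double, Nat.odd_even; auto. }
  assert (HL' : forall x i c, L' x (2 * i + Nat.b2n c)%nat = vcoord c (L (pack x) i)).
  { intros x i c; unfold L'; destruct (Hindex i c) as [-> ->]; reflexivity. }
  destruct (RealMatrix.linear_injective_surjective (2 * S n) L')
    with (y := fun k => vcoord (Nat.odd k) (y (Nat.div2 k))) as [x Hx].
  - intros x x' k; unfold L'.
    change (pack (fun i => x i + x' i)) with (fun i => vadd (pack x i) (pack x' i)).
    rewrite Ladd; apply vcoord_vadd.
  - intros a x k; unfold L'.
    change (pack (fun i => a * x i)) with (fun i => vscal a (pack x i)).
    rewrite Lscal; apply vcoord_vscal.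
  - intros x Hx k Hk.
    assert (Hpack : forall i, (i <= n)%nat -> pack x i = vzero).
    { apply Linj; intros i Hi; apply vcoord_inj; intros c.
      rewrite <- HL', Hx by (destruct c; cbn [Nat.b2n]; lia); destruct c; reflexivity. }
    pose proof (Nat.div2_odd k) as Hk2.
    assert (Hd : (Nat.div2 k <= n)%nat) by (destruct (Nat.odd k); cbn [Nat.b2n] in Hk2; lia).
    specialize (Hpack _ Hd); unfold pack, vzero in Hpack; injection Hpack as H0 H1.
    destruct (Nat.odd k); cbn [Nat.b2n] in Hk2; rewrite Hk2; [rewrite Nat.add_1_r | rewrite Nat.add_0_r]; assumption.
  - exists (pack x); intros k Hk; apply vcoord_inj; intros c.
    rewrite <- HL', Hx by (destruct c; cbn [Nat.b2n]; lia).
    destruct (Hindex k c) as [-> ->]; reflexivity.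
Qed.

Lemma sumR_ext n F G : (forall j, (1 <= j <= n)%nat -> F j = G j) -> sumR n F = sumR n G.
Proof.
  induction n as [|n IH]; intros H; simpl; [reflexivity|].
  rewrite IH, H by (lia || (intros; apply H; lia)); reflexivity.
Qed.

Lemma sumR_plus n F G : sumR n (fun j => F j + G j) = sumR n F + sumR n G.
Proof. induction n as [|n IH]; simpl; [ring | rewrite IH; ring]. Qed.

Lemma sumR_scal n c F : c * sumR n F = sumR n (fun j => c * F j).
Proof. induction n as [|n IH]; simpl; [ring | rewrite <- IH; ring]. Qed.

Lemma sumR_nonneg n F : (forall j, (1 <= j <= n)%nat -> 0 <= F j) -> 0 <= sumR n F.
Proof.
  induction n as [|n IH]; intros H; simpl; [lra|].
  assert (0 <= F (S n)) by (apply H; lia).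
  assert (0 <= sumR n F) by (apply IH; intros; apply H; lia).
  lra.
Qed.

Lemma sumR_nonneg_eq0 n F : (forall j, (1 <= j <= n)%nat -> 0 <= F j) -> sumR n F = 0 ->
  forall j, (1 <= j <= n)%nat -> F j = 0.
Proof.
  induction n as [|n IH]; intros H Hs j Hj; [lia|]; simpl in Hs.
  assert (0 <= F (S n)) by (apply H; lia).
  assert (0 <= sumR n F) by (apply sumR_nonneg; intros; apply H; lia).
  destruct (Nat.eq_dec j (S n)) as [->|Hne]; [lra|].
  apply IH; [intros; apply H; lia | lra | lia].
Qed.

Lemma sum_f_R0_succ f n : sum_f_R0 f (S n) = sum_f_R0 f n + f (S n).
Proof. reflexivity. Qed.

Lemma sumR_sum_f_R0 n F : sumR n F = sum_f_R0 (fun i => if Nat.eqb i 0 then 0 else F i) n.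
Proof.
  induction n as [|n IH]; [reflexivity|].
  rewrite sum_f_R0_succ, <- IH; reflexivity.
Qed.

Lemma sumR_pred_sum_f_R0 n G :
  sumR n (fun j => G (j - 1)%nat) = sum_f_R0 (fun i => if Nat.eqb i n then 0 else G i) n.
Proof.
  destruct n as [|m]; [reflexivity|].
  rewrite sum_f_R0_succ, Nat.eqb_refl, Rplus_0_r.
  rewrite (sum_eq _ G) by (intros i Hi; replace (Nat.eqb i (S m)) with false
                             by (symmetry; apply Nat.eqb_neq; lia); reflexivity).
  induction m as [|m IH]; [simpl; ring|].
  rewrite sum_f_R0_succ, <- IH; reflexivity.
Qed.

Lemma sum_f_R0_ends f n : (1 <= n)%nat -> (forall i, (0 < i < n)%nat -> f i = 0) ->
  sum_f_R0 f n = f 0%nat + f n.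
Proof.
  induction n as [|[|n] IH]; intros Hn H; [lia | reflexivity|].
  rewrite sum_f_R0_succ, IH, (H (S n)) by (lia || (intros; apply H; lia)); ring.
Qed.

(* Element [j] = [q_{j-1}, q_j] contributes [A j] at its right node and [B j] at its left node. *)
Definition assemble (n : nat) (A B : nat -> R2) (i : nat) : R2 :=
  vadd (if Nat.eqb i 0 then vzero else A i) (if Nat.eqb i n then vzero else B (S i)).

Lemma sumR_assemble n eta A B :
  sumR n (fun j => vdot (eta j) (A j) + vdot (eta (j - 1)%nat) (B j))
  = sum_f_R0 (fun i => vdot (eta i) (assemble n A B i)) n.
Proof.
  assert (HB : sumR n (fun j => vdot (eta (j - 1)%nat) (B j))
              = sum_f_R0 (fun i => if Nat.eqb i n then 0 else vdot (eta i) (B (S i))) n).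
  { rewrite <- (sumR_pred_sum_f_R0 n (fun i => vdot (eta i) (B (S i)))).
    apply sumR_ext; intros j Hj; replace (S (j - 1)) with j by lia; reflexivity. }
  rewrite sumR_plus, HB, sumR_sum_f_R0, <- plus_sum.
  apply sum_eq; intros i _; unfold assemble; rewrite vdot_vadd_r.
  destruct (Nat.eqb i 0), (Nat.eqb i n); rewrite ?vdot_vzero_r; reflexivity.
Qed.

Lemma hmesh_pos J : (1 <= J)%nat -> hmesh J > 0.
Proof. intros HJ; apply Rinv_0_lt_compat, lt_0_INR; lia. Qed.

Lemma absXrho_nonneg J X j : 0 <= absXrho J X j.
Proof. apply sqrt_pos. Qed.

Lemma ml_w_ext J X u v chi : (forall j, (j <= J)%nat -> u j = v j) ->
  ml_w J X u chi = ml_w J X v chi.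
Proof.
  intros H; unfold ml_w, mass_lumped; f_equal; apply sumR_ext; intros j Hj.
  rewrite (H j), (H (j - 1)%nat) by lia; reflexivity.
Qed.

Lemma ml_w_vadd J X u v chi :
  ml_w J X (fun j => vadd (u j) (v j)) chi = ml_w J X u chi + ml_w J X v chi.
Proof.
  unfold ml_w, mass_lumped; rewrite <- Rmult_plus_distr_l, <- sumR_plus; f_equal.
  apply sumR_ext; intros; vunfold; ring.
Qed.

Lemma ml_w_vsub J X u v chi :
  ml_w J X (fun j => vsub (u j) (v j)) chi = ml_w J X u chi - ml_w J X v chi.
Proof.
  pose proof (ml_w_vadd J X (fun j => vsub (u j) (v j)) v chi) as E; cbv beta in E.
  rewrite (ml_w_ext J X (fun j => vadd (vsub (u j) (v j)) (v j)) u) in E by (intros; vring).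
  lra.
Qed.

Lemma vdot_weighted_nonneg s v w : 0 <= s -> 0 <= w -> 0 <= vdot (vscal s v) v * w.
Proof.
  intros Hs Hw; rewrite vdot_vscal_l.
  pose proof (vdot_self_nonneg v); apply Rmult_le_pos; [apply Rmult_le_pos|]; assumption.
Qed.

Lemma vdot_weighted_eq0 s v w : 0 < s -> 0 < w -> vdot (vscal s v) v * w = 0 -> v = vzero.
Proof.
  intros Hs Hw H; rewrite vdot_vscal_l in H; apply vdot_self_eq0.
  apply Rmult_integral in H as [H | H]; [apply Rmult_integral in H as [H | H] |]; lra.
Qed.

Lemma ml_w_weighted_terms_nonneg J X s u : (forall j, (j <= J)%nat -> 0 <= s j) ->
  forall j, (1 <= j <= J)%nat ->
  0 <= vdot (vscal (s j) (u j)) (u j) * absXrho J X j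
       + vdot (vscal (s (j - 1)%nat) (u (j - 1)%nat)) (u (j - 1)%nat) * absXrho J X j.
Proof.
  intros Hs j Hj; pose proof (absXrho_nonneg J X j).
  apply Rplus_le_le_0_compat; apply vdot_weighted_nonneg; auto; apply Hs; lia.
Qed.

Lemma ml_w_weighted_nonneg J X s u : (1 <= J)%nat -> (forall j, (j <= J)%nat -> 0 <= s j) ->
  0 <= ml_w J X (fun j => vscal (s j) (u j)) u.
Proof.
  intros HJ Hs; pose proof (hmesh_pos J HJ); unfold ml_w, mass_lumped.
  apply Rmult_le_pos; [lra|]; apply sumR_nonneg, ml_w_weighted_terms_nonneg, Hs.
Qed.

Lemma ml_w_weighted_definite J X s u : (1 <= J)%nat ->
  (forall j, (1 <= j <= J)%nat -> absXrho J X j > 0) -> (forall j, (j <= J)%nat -> 0 < s j) ->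
  ml_w J X (fun j => vscal (s j) (u j)) u = 0 -> forall j, (j <= J)%nat -> u j = vzero.
Proof.
  intros HJ Hlen Hs H0; pose proof (hmesh_pos J HJ); unfold ml_w, mass_lumped in H0.
  apply Rmult_integral in H0 as [H0 | H0]; [lra|].
  assert (Hs' : forall j, (j <= J)%nat -> 0 <= s j) by (intros j Hj; specialize (Hs j Hj); lra).
  assert (Helem : forall j, (1 <= j <= J)%nat -> u j = vzero /\ u (j - 1)%nat = vzero).
  { intros j Hj.
    pose proof (sumR_nonneg_eq0 _ _ (ml_w_weighted_terms_nonneg J X s u Hs') H0 j Hj) as E; cbv beta in E.
    pose proof (Hlen j Hj); pose proof (Hs j ltac:(lia)); pose proof (Hs (j - 1)%nat ltac:(lia)).
    pose proof (vdot_weighted_nonneg (s j) (u j) (absXrho J X j) ltac:(lra) ltac:(lra)).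
    pose proof (vdot_weighted_nonneg (s (j - 1)%nat) (u (j - 1)%nat) (absXrho J X j)
                  ltac:(lra) ltac:(lra)).
    split; [apply (vdot_weighted_eq0 (s j) _ (absXrho J X j))
           | apply (vdot_weighted_eq0 (s (j - 1)%nat) _ (absXrho J X j))]; lra. }
  intros [|j] Hj; [apply (Helem 1%nat) | apply (Helem (S j))]; lia.
Qed.

Lemma l2_stiff_nonneg J X u : (1 <= J)%nat -> (forall j, (1 <= j <= J)%nat -> absXrho J X j > 0) ->
  0 <= l2_stiff J X u u.
Proof.
  intros HJ Hlen; pose proof (hmesh_pos J HJ); unfold l2_stiff.
  apply sumR_nonneg; intros j Hj; pose proof (Hlen j Hj).
  pose proof (vdot_self_nonneg (Xrho J u j)).
  apply Rmult_le_pos; [lra|]; apply Rle_mult_inv_pos; lra.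
Qed.

Lemma l2_stiff_vadd J X Y Z eta :
  l2_stiff J X (fun j => vadd (Y j) (Z j)) eta = l2_stiff J X Y eta + l2_stiff J X Z eta.
Proof.
  unfold l2_stiff; rewrite <- sumR_plus; apply sumR_ext; intros.
  unfold Xrho, Rdiv; vunfold; ring.
Qed.

Definition lumped_mass_nodal (J : nat) (X u : nat -> R2) : nat -> R2 :=
  assemble J (fun j => vscal (hmesh J / 2 * absXrho J X j) (u j))
             (fun j => vscal (hmesh J / 2 * absXrho J X j) (u (j - 1)%nat)).

Definition stiffness_nodal (J : nat) (X Y : nat -> R2) : nat -> R2 :=
  assemble J (fun j => vscal (hmesh J * INR J / absXrho J X j) (Xrho J Y j))
             (fun j => vscal (- (hmesh J * INR J / absXrho J X j)) (Xrho J Y j)).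

Lemma ml_w_nodal J X u eta :
  ml_w J X u eta = sum_f_R0 (fun i => vdot (eta i) (lumped_mass_nodal J X u i)) J.
Proof.
  unfold ml_w, mass_lumped, lumped_mass_nodal; rewrite <- sumR_assemble, sumR_scal.
  apply sumR_ext; intros; vunfold; ring.
Qed.

Lemma l2_stiff_nodal J X Y eta :
  l2_stiff J X Y eta = sum_f_R0 (fun i => vdot (eta i) (stiffness_nodal J X Y i)) J.
Proof.
  unfold l2_stiff, stiffness_nodal; rewrite <- sumR_assemble.
  apply sumR_ext; intros; unfold Xrho, Rdiv; vunfold; ring.
Qed.

Definition boundary_load (k : bctype) (r : R) : R2 :=
  match k with B1 => (0, r) | B2 => (r, 0) | _ => vzero end.

Definition boundary_nodal (J : nat) (per : bool) (bcL bcR : bctype) (rho0 rho1 : R) (i : nat) : R2 :=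
  if per then vzero
  else vadd (if Nat.eqb i 0 then boundary_load bcL rho0 else vzero)
            (if Nat.eqb i J then boundary_load bcR rho1 else vzero).

Lemma bdry_term_nodal J per bcL bcR rho0 rho1 eta : (1 <= J)%nat ->
  bdry_term J per bcL bcR rho0 rho1 eta
  = sum_f_R0 (fun i => vdot (eta i) (boundary_nodal J per bcL bcR rho0 rho1 i)) J.
Proof.
  intros HJ; rewrite sum_f_R0_ends; [| assumption |].
  2:{ intros i Hi; unfold boundary_nodal; destruct per; [apply vdot_vzero_r|].
      rewrite (proj2 (Nat.eqb_neq i 0)), (proj2 (Nat.eqb_neq i J)) by lia; vunfold; ring. }
  unfold bdry_term, boundary_nodal; destruct per; [rewrite !vdot_vzero_r; ring|].
  rewrite !Nat.eqb_refl, (proj2 (Nat.eqb_neq 0 J)), (proj2 (Nat.eqb_neq J 0)) by lia.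
  destruct bcL, bcR; unfold bd_contrib, boundary_load; vunfold; ring.
Qed.

Section TestSpace.

Variables (J : nat) (per : bool) (bcL bcR : bctype).

(* In the periodic case the constraint u(q_J) = u(q_0) occupies node J, and the test
   equation of the identified node q_0 = q_J is folded into node 0. *)
Definition constrained (i : nat) (c : bool) : bool :=
  if per then Nat.eqb i J
  else if c then in_bd J per bcL bcR B2 i || in_bd J per bcL bcR BD i
  else in_bd J per bcL bcR B0 i || in_bd J per bcL bcR B1 i || in_bd J per bcL bcR BD i.

Definition constraint_value (u : nat -> R2) (i : nat) : R2 :=
  if per then vsub (u J) (u 0%nat) else u i.

Definition fold_periodic (N : nat -> R2) (i : nat) : R2 :=
  if per && Nat.eqb i 0 then vadd (N 0%nat) (N J) else N i.

Lemma fold_periodic_vadd M N i :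
  fold_periodic (fun j => vadd (M j) (N j)) i = vadd (fold_periodic M i) (fold_periodic N i).
Proof. unfold fold_periodic; destruct (per && Nat.eqb i 0); [vring | reflexivity]. Qed.

Lemma in_Vd_of_constraints u :
  (forall i c, (i <= J)%nat -> constrained i c = true -> vcoord c (constraint_value u i) = 0) ->
  in_Vd J per bcL bcR u.
Proof.
  unfold constrained, constraint_value; intros H; destruct per.
  - assert (HJ : forall c, vcoord c (vsub (u J) (u 0%nat)) = 0)
      by (intros c; apply (H J c (le_n J) (Nat.eqb_refl J))).
    split; [split|]; [| discriminate | repeat split; discriminate].
    intros _; apply vsub_eq0, vcoord_inj; intros c; rewrite HJ; destruct c; reflexivity.
  - split; [split; [discriminate|] |].
    + intros j Hj Hb; apply (H j false Hj); rewrite Hb; reflexivity.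
    + intros j Hj; repeat split; intros Hb.
      * apply (H j false Hj); rewrite Hb, orb_true_r; reflexivity.
      * apply (H j true Hj); rewrite Hb; reflexivity.
      * apply vcoord_inj; intros c; destruct c;
          [apply (H j true Hj) | apply (H j false Hj)]; rewrite Hb, ?orb_true_r; reflexivity.
Qed.

Lemma in_Vd_constrained eta i c : per = false -> in_Vd J per bcL bcR eta -> (i <= J)%nat ->
  constrained i c = true -> vcoord c (eta i) = 0.
Proof.
  intros Eper [[_ H0] Hbd] Hi; unfold constrained.
  destruct (Hbd i Hi) as (H1 & H2 & HD); rewrite Eper in *.
  destruct c; intros Hc.
  - apply orb_prop in Hc as [Hc | Hc]; [apply H2, Hc | rewrite (HD Hc); reflexivity].
  - apply orb_prop in Hc as [Hc | Hc]; [apply orb_prop in Hc as [Hc | Hc] |].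
    + apply H0; assumption.
    + apply H1, Hc.
    + rewrite (HD Hc); reflexivity.
Qed.

Lemma in_Vd_vsub u v : in_Vd J per bcL bcR u -> in_Vd J per bcL bcR v ->
  in_Vd J per bcL bcR (fun j => vsub (u j) (v j)).
Proof.
  intros [[Hu Hu0] Hud] [[Hv Hv0] Hvd]; split; [split|].
  - intros Hp; rewrite (Hu Hp), (Hv Hp); reflexivity.
  - intros j Hj Hb; unfold vsub; cbn [fst]; rewrite (Hu0 j Hj Hb), (Hv0 j Hj Hb); ring.
  - intros j Hj; destruct (Hud j Hj) as (A1 & A2 & A3), (Hvd j Hj) as (B1 & B2 & B3).
    repeat split; intros Hb; unfold vsub; cbn [fst snd].
    + rewrite (A1 Hb), (B1 Hb); ring.
    + rewrite (A2 Hb), (B2 Hb); ring.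
    + rewrite (A3 Hb), (B3 Hb); vring.
Qed.

Lemma vdot_free_coords_zero (m : bool -> bool) a v :
  (forall c, m c = true -> vcoord c a = 0) -> (forall c, m c = false -> vcoord c v = 0) ->
  vdot a v = 0.
Proof.
  intros Ha Hv; rewrite vdot_vcoord.
  assert (E : forall c, vcoord c a * vcoord c v = 0).
  { intros c; destruct (m c) eqn:Em; [rewrite (Ha c Em) | rewrite (Hv c Em)]; ring. }
  rewrite (E false), (E true); ring.
Qed.

Lemma nodal_pairing_Vd_zero eta N : (1 <= J)%nat -> in_Vd J per bcL bcR eta ->
  (forall i c, (i <= J)%nat -> constrained i c = false -> vcoord c (fold_periodic N i) = 0) ->
  sum_f_R0 (fun i => vdot (eta i) (N i)) J = 0.
Proof.
  intros HJ Heta HN; destruct (bool_dec per true) as [Eper | Eper%not_true_is_false].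
  - assert (Hfree : forall i c, (i < J)%nat -> vcoord c (fold_periodic N i) = 0)
      by (intros i c Hi; apply HN; [lia | unfold constrained; rewrite Eper; apply Nat.eqb_neq; lia]).
    rewrite sum_f_R0_ends; [| assumption |].
    2:{ intros i Hi; apply (vdot_free_coords_zero (fun _ => false)); [discriminate|].
        intros c _; rewrite <- (Hfree i c) by lia; unfold fold_periodic.
        rewrite Eper, (proj2 (Nat.eqb_neq i 0)) by lia; reflexivity. }
    destruct Heta as [[HetaJ _] _]; rewrite (HetaJ Eper), <- vdot_vadd_r.
    apply (vdot_free_coords_zero (fun _ => false)); [discriminate|].
    intros c _; rewrite <- (Hfree 0%nat c) by lia; unfold fold_periodic; rewrite Eper; reflexivity.
  - rewrite (sum_eq _ (fun _ => 0)), sum_cte by (intros i Hi;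
      apply (vdot_free_coords_zero (constrained i));
      [ intros c; apply in_Vd_constrained; auto
      | intros c Hc; rewrite <- (HN i c Hi Hc); unfold fold_periodic; rewrite Eper; reflexivity ]).
    ring.
Qed.

Definition galerkin_solution (K : (nat -> R2) -> nat -> R2) (F : nat -> R2) (u : nat -> R2) : Prop :=
  in_Vd J per bcL bcR u /\
  forall eta, in_Vd J per bcL bcR eta ->
    sum_f_R0 (fun i => vdot (eta i) (vadd (K u i) (F i))) J = 0.

Variables (K : (nat -> R2) -> nat -> R2) (F : nat -> R2).

Hypothesis HJ : (1 <= J)%nat.
Hypothesis K_vadd : forall u v i, K (fun j => vadd (u j) (v j)) i = vadd (K u i) (K v i).
Hypothesis K_vscal : forall a u i, K (fun j => vscal a (u j)) i = vscal a (K u i).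
Hypothesis K_coercive : forall u, in_Vd J per bcL bcR u ->
  sum_f_R0 (fun i => vdot (u i) (K u i)) J = 0 -> forall i, (i <= J)%nat -> u i = vzero.

Lemma galerkin_solvable : exists u, galerkin_solution K F u.
Proof.
  (* A square system: the constraints on the constrained coordinates, the folded test
     equations on the free ones. *)
  set (row := fun u i => vselect (constrained i) (constraint_value u i) (fold_periodic (K u) i)).
  assert (row_Vd : forall u y,
            (forall i, (i <= J)%nat -> row u i = vselect (constrained i) vzero (y i)) ->
            in_Vd J per bcL bcR u).
  { intros u y Hrow; apply in_Vd_of_constraints; intros i c Hi Hc.
    specialize (Hrow i Hi); apply (f_equal (vcoord c)) in Hrow.
    unfold row in Hrow; rewrite !vcoord_vselect, Hc in Hrow; destruct c; exact Hrow. }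
  destruct (nodal_linear_surjective J row)
    with (y := fun i => vselect (constrained i) vzero (vopp (fold_periodic F i))) as [u Hu].
  - intros u v k; unfold row, vselect, constraint_value, fold_periodic; rewrite !K_vadd.
    destruct (per && Nat.eqb k 0), per, (constrained k false), (constrained k true); vring.
  - intros a u k; unfold row, vselect, constraint_value, fold_periodic; rewrite !K_vscal.
    destruct (per && Nat.eqb k 0), per, (constrained k false), (constrained k true); vring.
  - intros u Hrow.
    assert (Hzero : forall i, (i <= J)%nat -> row u i = vselect (constrained i) vzero vzero)
      by (intros i Hi; rewrite vselect_same; apply Hrow, Hi).
    apply K_coercive; [exact (row_Vd u (fun _ => vzero) Hzero) |].
    apply nodal_pairing_Vd_zero; [assumption | exact (row_Vd u (fun _ => vzero) Hzero) |].
    intros i c Hi Hc; specialize (Hzero i Hi); apply (f_equal (vcoord c)) in Hzero.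
    unfold row in Hzero; rewrite !vcoord_vselect, Hc in Hzero; rewrite Hzero; destruct c; reflexivity.
  - exists u; split; [exact (row_Vd u _ Hu) |].
    intros eta Heta; apply nodal_pairing_Vd_zero; [assumption | assumption |].
    intros i c Hi Hc; specialize (Hu i Hi); apply (f_equal (vcoord c)) in Hu.
    unfold row in Hu; rewrite !vcoord_vselect, Hc in Hu.
    rewrite fold_periodic_vadd, vcoord_vadd, Hu; destruct c; simpl; ring.
Qed.

Lemma galerkin_unique u u' : galerkin_solution K F u -> galerkin_solution K F u' ->
  forall i, (i <= J)%nat -> u' i = u i.
Proof.
  intros [Hu Hsol] [Hu' Hsol'] i Hi.
  set (e := fun j => vsub (u' j) (u j)).
  assert (He : in_Vd J per bcL bcR e) by exact (in_Vd_vsub u' u Hu' Hu).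
  assert (K_split : forall j, K u' j = vadd (K e j) (K u j)).
  { intros j; rewrite <- K_vadd; f_equal; apply functional_extensionality; intros k; unfold e; vring. }
  apply vsub_eq0, (K_coercive e He); [| exact Hi].
  rewrite (sum_eq _ (fun j => vdot (e j) (vadd (K u' j) (F j)) - vdot (e j) (vadd (K u j) (F j))))
    by (intros j _; rewrite K_split; vunfold; ring).
  rewrite minus_sum, (Hsol' e He), (Hsol e He); ring.
Qed.

End TestSpace.

Section Scheme.

Variables (J : nat) (per : bool) (bcL bcR : bctype) (rho0 rho1 : R) (Xm omega : nat -> R2) (dt : R).

Hypothesis HJ : (1 <= J)%nat.
Hypothesis Hlen : forall j, (1 <= j <= J)%nat -> absXrho J Xm j > 0.
Hypothesis Hdt : dt > 0.

Local Notation on_d0 j := (in_bd J per bcL bcR B0 j).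

(* Off d_0 I the operator K^m does not depend on its argument. *)
Definition Kfrak_free (j : nat) : R2 :=
  vscal (fst (omega j) / fst (Xm j) / vdot (omega j) (omega j)) (omega j).

Definition curv_mult (j : nat) : R := if on_d0 j then 2 else 1.

Definition kappa_offset (j : nat) : R2 := if on_d0 j then vzero else Kfrak_free j.

Definition kappa_of (u : nat -> R2) (j : nat) : R2 :=
  vadd (vscal (/ (curv_mult j * dt)) (u j)) (kappa_offset j).

Lemma curv_mult_pos j : 0 < curv_mult j.
Proof. unfold curv_mult; destruct (on_d0 j); lra. Qed.

Lemma Kfrak_split k j :
  Kfrak J per bcL bcR Xm omega k j = if on_d0 j then vopp (k j) else Kfrak_free j.
Proof. reflexivity. Qed.

Lemma first_eq_residual u k j :
  vsub (vscal (/ dt) (vsub (vadd (Xm j) (u j)) (Xm j)))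
       (vsub (k j) (Kfrak J per bcL bcR Xm omega k j))
  = vscal (curv_mult j) (vsub (kappa_of u j) (k j)).
Proof.
  rewrite Kfrak_split; unfold kappa_of, kappa_offset, curv_mult.
  destruct (on_d0 j); apply injective_projections; vunfold; field; lra.
Qed.

Lemma kappa_of_in_Vh u : in_Vh J per Xm -> in_Vh J per omega -> in_Vh J per u ->
  in_Vh J per (kappa_of u).
Proof.
  intros HX Hom Hu Hp; unfold kappa_of, kappa_offset, curv_mult, Kfrak_free, in_bd.
  rewrite Hp; cbn [negb andb]; rewrite (HX Hp), (Hom Hp), (Hu Hp); reflexivity.
Qed.

Lemma first_eq_iff dX kappa :
  in_Vh J per Xm -> in_Vh J per omega -> in_Vh J per dX -> in_Vh J per kappa ->
  (forall chi, in_Vh J per chi ->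
     ml_w J Xm (fun j => vscal (/ dt) (vsub (vadd (Xm j) (dX j)) (Xm j))) chi
     = ml_w J Xm (fun j => vsub (kappa j) (Kfrak J per bcL bcR Xm omega kappa j)) chi)
  <-> (forall j, (j <= J)%nat -> kappa j = kappa_of dX j).
Proof.
  intros HX Hom HdX Hk; split.
  - intros Heq.
    set (d := fun j => vsub (kappa_of dX j) (kappa j)).
    assert (Hd : in_Vh J per d)
      by (intros Hp; unfold d; rewrite (kappa_of_in_Vh dX HX Hom HdX Hp), (Hk Hp); reflexivity).
    assert (Hres : ml_w J Xm (fun j => vscal (curv_mult j) (d j)) d = 0).
    { rewrite <- (ml_w_ext J Xm
        (fun j => vsub (vscal (/ dt) (vsub (vadd (Xm j) (dX j)) (Xm j)))
                       (vsub (kappa j) (Kfrak J per bcL bcR Xm omega kappa j))))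
        by (intros j _; apply first_eq_residual).
      rewrite ml_w_vsub, (Heq d Hd); ring. }
    intros j Hj; symmetry; apply vsub_eq0.
    apply (ml_w_weighted_definite J Xm curv_mult d HJ Hlen); auto.
    intros; apply curv_mult_pos.
  - intros Hkap chi _; apply ml_w_ext; intros j Hj; apply vsub_eq0.
    rewrite first_eq_residual, (Hkap j Hj); vring.
Qed.

Definition Kop (u : nat -> R2) (i : nat) : R2 :=
  vadd (lumped_mass_nodal J Xm (fun j => vscal (/ (curv_mult j * dt)) (u j)) i)
       (stiffness_nodal J Xm u i).

Definition load (i : nat) : R2 :=
  vadd (vadd (lumped_mass_nodal J Xm kappa_offset i) (stiffness_nodal J Xm Xm i))
       (boundary_nodal J per bcL bcR rho0 rho1 i).

Lemma Kop_vadd u v i : Kop (fun j => vadd (u j) (v j)) i = vadd (Kop u i) (Kop v i).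
Proof.
  unfold Kop, lumped_mass_nodal, stiffness_nodal, assemble, Xrho.
  destruct (Nat.eqb i 0), (Nat.eqb i J); vring.
Qed.

Lemma Kop_vscal a u i : Kop (fun j => vscal a (u j)) i = vscal a (Kop u i).
Proof.
  unfold Kop, lumped_mass_nodal, stiffness_nodal, assemble, Xrho.
  destruct (Nat.eqb i 0), (Nat.eqb i J); vring.
Qed.

Lemma Kop_pairing u eta :
  sum_f_R0 (fun i => vdot (eta i) (Kop u i)) J
  = ml_w J Xm (fun j => vscal (/ (curv_mult j * dt)) (u j)) eta + l2_stiff J Xm u eta.
Proof.
  rewrite ml_w_nodal, l2_stiff_nodal, <- plus_sum.
  apply sum_eq; intros i _; apply vdot_vadd_r.
Qed.

Lemma Kop_coercive u : sum_f_R0 (fun i => vdot (u i) (Kop u i)) J = 0 ->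
  forall i, (i <= J)%nat -> u i = vzero.
Proof.
  rewrite Kop_pairing; intros H0.
  assert (Hs : forall j, (j <= J)%nat -> 0 < / (curv_mult j * dt))
    by (intros; apply Rinv_0_lt_compat, Rmult_lt_0_compat; [apply curv_mult_pos | exact Hdt]).
  pose proof (ml_w_weighted_nonneg J Xm _ u HJ (fun j Hj => Rlt_le _ _ (Hs j Hj))).
  pose proof (l2_stiff_nonneg J Xm u HJ Hlen).
  apply (ml_w_weighted_definite J Xm _ u HJ Hlen Hs); lra.
Qed.

Lemma second_eq_nodal u eta :
  ml_w J Xm (kappa_of u) eta + l2_stiff J Xm (fun j => vadd (Xm j) (u j)) eta
  + bdry_term J per bcL bcR rho0 rho1 eta
  = sum_f_R0 (fun i => vdot (eta i) (vadd (Kop u i) (load i))) J.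
Proof.
  unfold kappa_of; rewrite ml_w_vadd, l2_stiff_vadd, (bdry_term_nodal J per bcL bcR rho0 rho1 eta HJ).
  rewrite !ml_w_nodal, !l2_stiff_nodal, <- !plus_sum.
  apply sum_eq; intros i _; unfold Kop, load; rewrite !vdot_vadd_r; ring.
Qed.

Lemma scheme_eqs_iff dX kappa :
  in_Vh J per Xm -> in_Vh J per omega -> in_Vd J per bcL bcR dX -> in_Vh J per kappa ->
  scheme_eqs J per bcL bcR rho0 rho1 dt Xm omega dX kappa <->
  (forall j, (j <= J)%nat -> kappa j = kappa_of dX j) /\ galerkin_solution J per bcL bcR Kop load dX.
Proof.
  intros HX Hom HdX Hk; pose proof (proj1 (proj1 HdX)) as HdXh.
  pose proof (first_eq_iff dX kappa HX Hom HdXh Hk) as Hfirst.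
  split.
  - intros [H1 H2]; pose proof (proj1 Hfirst H1) as Hkap.
    split; [exact Hkap | split; [exact HdX |]]; intros eta Heta.
    rewrite <- second_eq_nodal, <- (ml_w_ext J Xm kappa) by exact Hkap.
    rewrite (H2 eta Heta); ring.
  - intros [Hkap [_ Hsol]]; split; [exact (proj2 Hfirst Hkap) |]; intros eta Heta.
    pose proof (Hsol eta Heta) as E; rewrite <- second_eq_nodal in E.
    rewrite (ml_w_ext J Xm kappa (kappa_of dX)) by exact Hkap; lra.
Qed.

End Scheme.

Theorem lemma4p2 (J : nat) (per : bool) (bcL bcR : bctype) (rho0 rho1 : R)
  (Xm omega : nat -> R2) (dt : R) :
  (3 <= J)%nat ->
  Rabs rho0 <= 1 -> Rabs rho1 <= 1 ->
  in_V0 J per bcL bcR Xm ->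
  assumption_A J per bcL bcR Xm ->
  is_omega J per Xm omega ->
  (forall j, (j <= J)%nat -> in_bd J per bcL bcR B0 j = false -> omega j <> vzero) ->
  dt > 0 ->
  exists dX kappa : nat -> R2,
    in_Vd J per bcL bcR dX /\ in_Vh J per kappa /\
    scheme_eqs J per bcL bcR rho0 rho1 dt Xm omega dX kappa /\
    (forall dX' kappa' : nat -> R2,
       in_Vd J per bcL bcR dX' -> in_Vh J per kappa' ->
       scheme_eqs J per bcL bcR rho0 rho1 dt Xm omega dX' kappa' ->
       forall j, (j <= J)%nat -> dX' j = dX j /\ kappa' j = kappa j).
Proof.
  intros HJ3 _ _ [HX _] [Hlen _] [Hom _] _ Hdt.
  assert (HJ : (1 <= J)%nat) by lia.
  set (K := Kop J per bcL bcR Xm dt).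
  set (F := load J per bcL bcR rho0 rho1 Xm omega).
  assert (Hcoer : forall u, in_Vd J per bcL bcR u ->
            sum_f_R0 (fun i => vdot (u i) (K u i)) J = 0 -> forall i, (i <= J)%nat -> u i = vzero)
    by (intros u _; exact (Kop_coercive J per bcL bcR Xm dt HJ Hlen Hdt u)).
  destruct (galerkin_solvable J per bcL bcR K F HJ (Kop_vadd J per bcL bcR Xm dt)
              (Kop_vscal J per bcL bcR Xm dt) Hcoer) as [u Hu].
  set (kappa := kappa_of J per bcL bcR Xm omega dt u).
  pose proof (proj1 Hu) as HuVd.
  assert (Hkappa : in_Vh J per kappa)
    by exact (kappa_of_in_Vh J per bcL bcR Xm omega dt u HX Hom (proj1 (proj1 HuVd))).
  exists u, kappa; split; [exact HuVd |]; split; [exact Hkappa |]; split.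
  - apply (scheme_eqs_iff J per bcL bcR rho0 rho1 Xm omega dt HJ Hlen Hdt); try assumption.
    split; [intros; reflexivity | exact Hu].
  - intros dX' kappa' HdX' Hkappa' Hs j Hj.
    destruct (proj1 (scheme_eqs_iff J per bcL bcR rho0 rho1 Xm omega dt HJ Hlen Hdt
                       dX' kappa' HX Hom HdX' Hkappa') Hs) as [Hk' Hsol'].
    pose proof (galerkin_unique J per bcL bcR K F (Kop_vadd J per bcL bcR Xm dt) Hcoer
                  u dX' Hu Hsol' j Hj) as Hdx.
    split; [exact Hdx |].
    rewrite (Hk' j Hj); unfold kappa, kappa_of; rewrite Hdx; reflexivity.
Qed.
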